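(* Let $p$ be a prime, let $G$ be a finite soluble group with $O_p(G)=1$, and let $A$ be a non-empty normal subset of $G$ consisting of elements of order $p$ such that every element of $A^2=\{xy\mid x,y\in A\}$ is a $p$-element. Let $a\in A\setminus G'$ and $c\in G'$, and suppose that $X=\langle c,a\rangle$ is elementary abelian of order $p^2$. Then $|a^G\cap X|<p$.
   Context: A normal subset of $G$ is a subset closed under conjugation by elements of $G$. $O_p(G)$ is the largest normal $p$-subgroup of $G$, $G'$ is the derived subgroup, and $a^G$ is the conjugacy class of $a$. *)

From mathcomp Require Import all_boot all_fingroup all_solvable.
Set Implicit Arguments. Unset Strict Implicit. Unset Printing Implicit Defensive.

From mathcomp Require Import all_boot all_fingroup all_solvable ssralg.
Set Implicit Arguments. Unset Strict Implicit. Unset Printing Implicit Defensive.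
Import GRing.Theory FiniteModule.
Local Open Scope ring_scope.
Local Open Scope group_scope.

(* Suppose |a^G :&: X| >= p. Since a^-1 a^g is a commutator and G' :&: X = <[c]>,
   a^G :&: X lies in, hence fills, the coset a<[c]>, so a<[c]> is contained in A.
   For y in a<[c]> and m in F = F(G) centralizing y, the elements (y c^-1)^m and
   y c lie in A and their product is y^2 [m, y c], with [m, y c] commuting with y:
   so [m, y c] is a p-element of the p'-group F, i.e. trivial, and m centralizes c.
   Thus c centralizes C_F(a c^j) for every j; as <a, c> is elementary abelian of
   order p^2 acting coprimely on F, this forces [F, c] = 1 (a trace computation
   for abelian F, induction along the derived series in general). But for soluble
   G we have C_G(F) <= F, so the p-element c lies in the p'-group F: c = 1. *)

Lemma cent1X_coprime (gT : finGroupType) (x : gT) m :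
  coprime #[x] m -> 'C[x ^+ m] = 'C[x].
Proof. by rewrite -generator_coprime => /eqP gen_x; rewrite -!cent_cycle gen_x. Qed.

Lemma coset_expg_p (gT : finGroupType) (a c : gT) p j :
  commute a c -> a ^+ p = 1 -> c ^+ p = 1 -> (a * c ^+ j) ^+ p = 1.
Proof.
move=> cac ap1 cp1; rewrite expgMn; last exact: commuteX.
by rewrite ap1 mul1g -expgM mulnC expgM cp1 expg1n.
Qed.

Section AbelianCosetCentralizers.

Variables (gT : finGroupType) (p : nat) (a c : gT) (V : {group gT}).
Hypotheses (p_pr : prime p) (cac : commute a c) (ap1 : a ^+ p = 1) (cp1 : c ^+ p = 1).
Hypotheses (abV : abelian V) (coVp : coprime #|V| p) (nVa : a \in 'N(V)) (nVc : c \in 'N(V)).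

Local Notation M := (fmod_of abV).

Lemma fmod_act_fixE (w : M) g : g \in 'N(V) -> (w ^@ g == w) = (val w \in 'C[g]).
Proof.
move=> nVg; apply/eqP/cent1P => [wg | cwg].
  by apply/commgP/conjg_fixP; rewrite -fmvalJ // wg.
by apply: val_inj; rewrite fmvalJ //; apply/conjg_fixP/commgP.
Qed.

Definition orbit_sum g (w : M) := \sum_(k < p) w ^@ g ^+ k.

Lemma orbit_sum_fixed g w :
  g \in 'N(V) -> g ^+ p = 1 -> orbit_sum g w ^@ g = orbit_sum g w.
Proof.
move=> nVg; rewrite /orbit_sum actr_sum -(prednK (prime_gt0 p_pr)) => gp1.
rewrite big_ord_recr big_ord_recl /= expg0 addrC.
congr (_ + _); first by rewrite -actrM ?groupX // -expgSr gp1.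
by apply: eq_bigr => k _; rewrite -actrM ?groupX // -expgSr.
Qed.

Lemma orbit_sum_cycleX_fixed (k : 'I_p.-1) w :
  orbit_sum (c ^+ k.+1) w ^@ c = orbit_sum (c ^+ k.+1) w.
Proof.
have co_ck : coprime #[c] k.+1.
  apply: coprime_dvdl (_ : #[c] %| p)%N _; first by rewrite order_dvdn cp1.
  by rewrite prime_coprime // gtnNdvd // -ltn_predRL.
apply/eqP; rewrite fmod_act_fixE // -(cent1X_coprime co_ck) -fmod_act_fixE ?groupX //.
by apply/eqP/orbit_sum_fixed; rewrite ?groupX // -expgM mulnC expgM cp1 expg1n.
Qed.

(* Over the p lines <[a c^j]>, the identity is counted p times and every
   a^k c^l with 0 < k < p exactly once. *)
Lemma sum_orbit_sum_cosets u :
  \sum_(j < p) orbit_sum (a * c ^+ j) u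
    = u *+ p + \sum_(k < p.-1) orbit_sum (c ^+ k.+1) (u ^@ a ^+ k.+1).
Proof.
have swap_powers j k : u ^@ (a * c ^+ j) ^+ k = u ^@ a ^+ k ^@ (c ^+ k) ^+ j.
  rewrite expgMn; last exact: commuteX.
  by rewrite -expgM mulnC expgM actrM ?groupX.
rewrite {1}/orbit_sum exchange_big /=.
rewrite (eq_bigr (fun k : 'I_p => orbit_sum (c ^+ k) (u ^@ a ^+ k))); last first.
  by move=> k _; apply: eq_bigr => j _; apply: swap_powers.
rewrite -[in LHS](prednK (prime_gt0 p_pr)) big_ord_recl /=; congr (_ + _).
rewrite /orbit_sum (eq_bigr (fun=> u)) ?sumr_const ?card_ord // => j _.
by rewrite expg1n !actr1.
Qed.

Lemma abelian_coprime_cent_cosets :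
  (forall j, 'C_V[a * c ^+ j] \subset 'C[c]) -> V \subset 'C[c].
Proof.
move=> cVc; apply/subsetP => v Vv; pose u : M := fmod abV v.
have fix_cosets j : orbit_sum (a * c ^+ j) u ^@ c = orbit_sum (a * c ^+ j) u.
  have nVac : a * c ^+ j \in 'N(V) by rewrite groupM ?groupX.
  apply/eqP; rewrite fmod_act_fixE //; apply: (subsetP (cVc j)).
  rewrite inE fmodP -fmod_act_fixE //.
  by apply/eqP/orbit_sum_fixed; rewrite ?coset_expg_p.
have: (u *+ p) ^@ c = u *+ p.
  have := sum_orbit_sum_cosets u; set S := \sum_(k < p.-1) _ => sum_cosets.
  have fixS : S ^@ c = S.
    by rewrite actr_sum; apply: eq_bigr => k _; apply: orbit_sum_cycleX_fixed.
  apply: (addIr S); rewrite -{1}fixS -actAr -sum_cosets actr_sum.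
  by apply: eq_bigr => j _; apply: fix_cosets.
move/eqP; rewrite fmod_act_fixE // fmvalZ fmodK // => cvp.
by rewrite -(expgK coVp Vv) groupX.
Qed.

End AbelianCosetCentralizers.

Lemma coprime_quotient_cent1 (gT : finGroupType) (K N : {group gT}) x :
    x \in 'N(K) -> x \in 'N(N) -> coprime #|N| #[x] -> solvable N ->
  'C_K[x] / N = 'C_(K / N)[coset N x].
Proof.
move=> nKx nNx coNx solN; rewrite -!cent_cycle -quotient_cycle //.
by apply: coprime_norm_quotient_cent; rewrite ?cycle_subG -?orderE.
Qed.

Lemma coprime_cent_cosets (gT : finGroupType) (K : {group gT}) (p : nat) (a c : gT) :
    prime p -> commute a c -> a ^+ p = 1 -> c ^+ p = 1 ->
    solvable K -> coprime #|K| p -> a \in 'N(K) -> c \in 'N(K) ->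
  (forall j, 'C_K[a * c ^+ j] \subset 'C[c]) -> K \subset 'C[c].
Proof.
move=> p_pr; move: {2}#|K| (leqnn #|K|) => n.
elim: n gT K a c => [|n IHn] gT K a c; first by rewrite leqNgt cardG_gt0.
move=> leKn cac ap1 cp1 solK coKp nKa nKc cKc.
have [abK | nabK] := boolP (abelian K).
  exact: (abelian_coprime_cent_cosets p_pr cac ap1 cp1 abK coKp nKa nKc cKc).
set N := K^`(1); have nsNK : N <| K := der_normal 1 K.
have ntN : N :!=: 1 by apply: contraNneq nabK => /derG1P.
have ntK : K :!=: 1 by apply: contraNneq ntN => K1; apply/eqP/trivgP; rewrite -K1 der_sub.
have ltNK : #|N| < #|K| := proper_card (sol_der1_proper solK (subxx K) ntK).
have nN_K x : x \in 'N(K) -> x \in 'N(N).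
  by rewrite -!cycle_subG => nKx; apply: char_norm_trans (der_char 1 K) nKx.
have nNa := nN_K a nKa; have nNc := nN_K c nKc.
have solN : solvable N := solvableS (normal_sub nsNK) solK.
have coNp : coprime #|N| p := coprimeSg (normal_sub nsNK) coKp.
have quo_cent x : x \in 'N(K) -> x ^+ p = 1 -> 'C_K[x] / N = 'C_(K / N)[coset N x].
  move=> nKx xp1; apply: coprime_quotient_cent1; rewrite ?nN_K //.
  by apply: coprime_dvdr coNp; rewrite order_dvdn xp1.
have cNc : N \subset 'C[c].
  apply: (IHn _ _ a c) => //; first by rewrite -ltnS (leq_trans ltNK).
  by move=> j; apply: subset_trans (cKc j); rewrite setSI ?der_sub.
have cKNc : K / N \subset 'C[coset N c].
  have nNac j : a * c ^+ j \in 'N(N) by rewrite groupM ?groupX.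
  apply: (IHn _ _ (coset N a) (coset N c)); rewrite ?quotient_sol //.
  - by rewrite -ltnS (leq_trans (ltn_quotient ntN (normal_sub nsNK))).
  - by rewrite /commute -!morphM ?cac.
  - by rewrite -morphX ?ap1 ?morph1.
  - by rewrite -morphX ?cp1 ?morph1.
  - exact: coprime_dvdl (dvdn_quotient _ _) coKp.
  - by rewrite -cycle_subG -quotient_cycle // quotient_norms ?cycle_subG.
  - by rewrite -cycle_subG -quotient_cycle // quotient_norms ?cycle_subG.
  move=> j; rewrite -morphX // -morphM ?groupX // -quo_cent ?groupM ?groupX //.
    by rewrite (subset_trans (quotientS N (cKc j))) ?morphim_cent1.
  exact: coset_expg_p.
have sNCc : N \subset 'C_K[c] by rewrite subsetI der_sub.
apply: subset_trans (subsetIr K _).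
by rewrite -(quotientSGK (normal_norm nsNK) sNCc) quo_cent // subsetI subxx.
Qed.

Lemma Fitting_max_cent_der (gT : finGroupType) (G H : {group gT}) :
  H <| G -> H \subset 'C('F(G)) -> H^`(1) \subset 'F(G) -> H \subset 'F(G).
Proof.
move=> nsHG cFH sH'F; apply: Fitting_max nsHG _.
apply/lcnP; exists 2; rewrite lcnSn lcn2; apply/commG1P.
by rewrite (subset_trans sH'F) // centsC.
Qed.

Lemma Fitting_cent_sub (gT : finGroupType) (G : {group gT}) :
  solvable G -> 'C_G('F(G)) \subset 'F(G).
Proof.
move=> solG; set C := 'C_G('F(G)).
have nsCG : C <| G.
  by have := subcent_normal G 'F(G); rewrite (setIidPl (normal_norm (Fitting_normal G))).
have [n Cn1] : exists n, C^`(n) = 1 by apply/derivedP/(solvableS (subsetIl G _)).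
have step m : C^`(m.+1) \subset 'F(G) -> C^`(m) \subset 'F(G).
  rewrite dergSn; apply: Fitting_max_cent_der.
    exact: char_normal_trans (der_char m C) nsCG.
  exact: subset_trans (der_sub m C) (subsetIr G _).
have: C^`(n) \subset 'F(G) by rewrite Cn1 sub1G.
by elim: n {Cn1} => // n IHn /step.
Qed.

Lemma Fitting_p'group (gT : finGroupType) (G : {group gT}) (p : nat) :
  'O_p(G) = 1 -> p^'.-group 'F(G).
Proof.
move=> Op1; have := nilpotent_pcoreC p (Fitting_nil G).
by rewrite p_core_Fitting Op1 dprod1g => <-; apply: pcore_pgroup.
Qed.

Lemma coset_der1_cap_sub_class (gT : finGroupType) (G H : {group gT}) a :
    a \in G -> a \in H -> #|G^`(1) :&: H| <= #|a ^: G :&: H| ->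
  a *: (G^`(1) :&: H) \subset a ^: G.
Proof.
move=> Ga Ha le_class.
have sub_coset : a ^: G :&: H \subset a *: (G^`(1) :&: H).
  apply/subsetP => _ /setIP[/imsetP[g Gg ->] Hag].
  by rewrite mem_lcoset inE (groupM (groupVr Ha) Hag) andbT derg1 -/(commg a g) mem_commg.
have/eqP <- : a ^: G :&: H == a *: (G^`(1) :&: H).
  by rewrite eqEcard sub_coset card_lcoset.
exact: subsetIl.
Qed.

Lemma cap_prime_index_cycle (gT : finGroupType) (H X : {group gT}) c :
  c \in H :&: X -> prime #|X : <[c]>| -> ~~ (X \subset H) -> H :&: X = <[c]>.
Proof.
move=> /setIP[Hc Xc] iXc nsXH.
have sCX : <[c]> \subset X by rewrite cycle_subG.
case/maxgroupP: (p_index_maximal sCX iXc) => _; apply; last first.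
  by rewrite subsetI !cycle_subG Hc.
by rewrite properEneq subsetIr andbT; apply: contraNneq nsXH => <-; apply: subsetIl.
Qed.

Lemma conjg_mul_commg (gT : finGroupType) (x y z m : gT) :
  commute m y -> x * z = y * y -> x ^ m * z = y * y * [~ m, z].
Proof.
move=> cmy xz; have cm'yy : commute m^-1 (y * y).
  by have cm'y := commute_sym (commuteV (commute_sym cmy)); apply: commuteM.
by rewrite /commg !conjgE [RHS]mulgA -cm'yy -xz !mulgA mulgK.
Qed.

Lemma p_elt_conj_prod_commute (gT : finGroupType) p (m y c : gT) :
    commute y c -> commute m y -> p^'.-elt [~ m, y * c] -> p.-elt y ->
    p.-elt ((y * c^-1) ^ m * (y * c)) ->
  commute m c.
Proof.
move=> cyc cmy p't py p_prod.
set z := y * c in p't p_prod; set t := [~ m, z] in p't.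
have cyz : commute y z := commuteM (commute_refl y) cyc.
have cym : commute y m := commute_sym cmy.
have xz : y * c^-1 * z = y * y.
  by rewrite /z mulgA -(mulgA y) -(commuteV cyc) mulgA mulgKV.
have def_prod : (y * c^-1) ^ m * z = y * y * t := conjg_mul_commg cmy xz.
have cty : commute t y.
  apply: commute_sym; apply: commuteM; first exact: commuteV.
  by rewrite conjgE; apply: commuteM (commuteV cyz) (commuteM cym cyz).
have pt : p.-elt t.
  have -> : t = (y * y)^-1 * ((y * c^-1) ^ m * z) by rewrite def_prod mulKg.
  have cyyt : commute (y * y) t by apply: commute_sym; apply: commuteM.
  have := commuteM (commute_refl (y * y)) cyyt; rewrite -def_prod.
  move/commute_sym/commuteV/commute_sym/p_eltM; apply=> //.
  by rewrite p_eltV; apply: p_eltM.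
have /commgP cmz : t == 1 by rewrite -order_eq1; apply/eqP/(pnat_1 pt p't).
have -> : c = y^-1 * z by rewrite mulKg.
exact: commuteM (commuteV cmy) cmz.
Qed.

Section NormalSubsetOfPElements.

Variables (gT : finGroupType) (G : {group gT}) (A : {set gT}) (p : nat).
Hypotheses (p_pr : prime p) (solG : solvable G) (Op1 : 'O_p(G) = 1).
Hypothesis sAG : A \subset G.
Hypothesis nAG : forall g x, g \in G -> x \in A -> x ^ g \in A.
Hypothesis oA : forall x, x \in A -> #[x] = p.
Hypothesis pA : forall x y, x \in A -> y \in A -> p.-elt (x * y).

Lemma Fitting_subcent1_sub (y c : gT) :
    commute y c -> y * c^-1 \in A -> y \in A -> y * c \in A ->
  'C_('F(G))[y] \subset 'C[c].
Proof.
move=> cyc Ay'c Ay Ayc; apply/subsetP => m /setIP[Fm /cent1P cmy]; apply/cent1P.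
have Gm := subsetP (Fitting_sub G) m Fm.
apply: (p_elt_conj_prod_commute cyc cmy); last by apply: pA; rewrite ?nAG.
  apply: mem_p_elt (Fitting_p'group Op1) _; rewrite /commg groupM ?groupV //.
  by rewrite memJ_norm // (subsetP (normal_norm (Fitting_normal G))) ?(subsetP sAG).
by rewrite /p_elt oA ?pnat_id.
Qed.

Lemma Fitting_cent_coset_sub (a c : gT) :
    commute a c -> c \in G -> c ^+ p = 1 -> {in <[c]>, forall x, a * x \in A} ->
  'F(G) \subset 'C[c].
Proof.
move=> cac Gc cp1 cosetA; have Aa : a \in A by rewrite -[a]mulg1 cosetA.
have nFG := normal_norm (Fitting_normal G).
apply: (coprime_cent_cosets p_pr cac _ cp1).
- by rewrite -(oA Aa) expg_order.
- exact: nilpotent_sol (Fitting_nil G).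
- exact: p'nat_coprime (Fitting_p'group Op1) (pnat_id p_pr).
- exact: subsetP nFG a (subsetP sAG a Aa).
- exact: subsetP nFG c Gc.
move=> j; apply: Fitting_subcent1_sub.
  by apply/commute_sym/commuteM; [apply: commute_sym | apply: commuteX].
all: by rewrite -?mulgA cosetA ?groupM ?groupV ?mem_cycle ?cycle_id.
Qed.

Lemma p_elt_cent_Fitting_eq1 (c : gT) :
  c \in G -> p.-elt c -> 'F(G) \subset 'C[c] -> c = 1.
Proof.
move=> Gc pc cFc; have Fc : c \in 'F(G).
  by apply: (subsetP (Fitting_cent_sub solG)); rewrite inE Gc -sub_cent1.
apply/eqP; rewrite -order_eq1; apply/eqP.
exact: pnat_1 pc (mem_p_elt (Fitting_p'group Op1) Fc).
Qed.

End NormalSubsetOfPElements.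

Lemma order_prime_gen_pair (gT : finGroupType) p (a c : gT) :
  prime p -> #[a] = p -> c ^+ p = 1 -> p < #|<<[set c; a]>>| -> #[c] = p.
Proof.
move=> p_pr oa cp1 ltpX; apply/prime_nt_dvdP; rewrite ?order_dvdn ?cp1 // order_eq1.
apply: contraTneq ltpX => c1; rewrite -leqNgt -oa orderE subset_leq_card //.
by rewrite gen_subG subUset !sub1set c1 group1 cycle_id.
Qed.

Theorem lemma3p1 (gT : finGroupType) (G : {group gT}) (p : nat) (A : {set gT})
    (a c : gT) :
  prime p ->
  solvable G ->
  'O_p(G) = 1 ->
  A \subset G ->
  A != set0 ->
  (forall g x, g \in G -> x \in A -> x ^ g \in A) ->
  (forall x, x \in A -> #[x] = p) ->
  (forall x y, x \in A -> y \in A -> p.-elt (x * y)) ->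
  a \in A -> a \notin G^`(1) ->
  c \in G^`(1) ->
  p.-abelem <<[set c; a]>> -> #|<<[set c; a]>>| = (p ^ 2)%N ->
  #|(a ^: G) :&: <<[set c; a]>>| < p.
Proof.
move=> p_pr solG Op1 sAG _ nAG oA pA Aa G'a G'c abelX oX.
set X := <<[set c; a]>> in abelX oX *.
have [cXX expX] := abelemP p_pr abelX.
have Xa : a \in X by rewrite mem_gen // !inE eqxx orbT.
have Xc : c \in X by rewrite mem_gen // !inE eqxx.
have Ga := subsetP sAG a Aa; have Gc := subsetP (der_sub 1 G) c G'c.
have oc : #[c] = p.
  apply: order_prime_gen_pair (oA a Aa) (expX c Xc) _ => //.
  by rewrite oX expnS expn1 ltn_Pmull ?prime_gt1 ?prime_gt0.
have G'X : G^`(1) :&: X = <[c]>.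
  apply: cap_prime_index_cycle; rewrite ?inE ?G'c //; last first.
    by apply: contra G'a => /subsetP; apply.
  by rewrite -divgS ?cycle_subG // oX -orderE oc expnS expn1 mulnK ?prime_gt0.
rewrite ltnNge; apply/negP => le_p_class.
have cosetA : {in <[c]>, forall x, a * x \in A}.
  move=> x cx; have: a * x \in a ^: G.
    apply: subsetP (coset_der1_cap_sub_class Ga Xa _) _ _.
      by rewrite G'X -orderE oc.
    by rewrite G'X mem_lcoset mulKg.
  by case/imsetP=> g Gg ->; apply: nAG.
have cFc := Fitting_cent_coset_sub p_pr Op1 sAG nAG oA pA (centsP cXX a Xa c Xc) Gc
  (expX c Xc) cosetA.
have pc : p.-elt c by rewrite /p_elt oc pnat_id.
have c1 := p_elt_cent_Fitting_eq1 solG Op1 Gc pc cFc.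
by move: oc; rewrite c1 order1 => p1; rewrite -p1 in p_pr.
Qed.
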